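(* (a) Let $(A,\widetilde{A})$ be a dual pair of closed operators on a Hilbert space satisfying the common core property with a common core $\mathcal{D}$, where $A$ is dissipative. Then there exist two symmetric operators $S$ and $V\ge0$ with $\mathcal{D}(S)=\mathcal{D}(V)=\mathcal{D}$ such that $A\upharpoonright_{\mathcal{D}}=S+iV$ and $\widetilde{A}\upharpoonright_{\mathcal{D}}=S-iV$. (b) Conversely, let $A$ be a dissipative operator of the form $A=S+iV$, where $S$ and $V\ge0$ are symmetric operators with $\mathcal{D}(A)=\mathcal{D}(S)=\mathcal{D}(V)=:\mathcal{D}$. Define $\widetilde{A}:=S-iV$ with $\mathcal{D}(\widetilde{A})=\mathcal{D}$. Then the closures $(\overline{A},\overline{\widetilde{A}})$ form a dual pair that has the common core property.
   Context: The inner product is antilinear in the first argument. A densely defined operator $B$ is dissipative if $\mathrm{Im}\langle\psi,B\psi\rangle\ge0$ for all $\psi\in\mathcal{D}(B)$. A pair $(A,\widetilde{A})$ of densely defined closable operators is a dual pair if $A\subset\widetilde{A}^*$ (equivalently $\widetilde{A}\subset A^*$). A dual pair of closed operators has the common core property if there is a subspace $\mathcal{D}\subset\mathcal{D}(A)\cap\mathcal{D}(\widetilde{A})$ with $\overline{A\upharpoonright_{\mathcal{D}}}=A$ and $\overline{\widetilde{A}\upharpoonright_{\mathcal{D}}}=\widetilde{A}$. *)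

From HB Require Import structures.
From mathcomp Require Import all_boot all_order all_algebra.
From mathcomp Require Import boolp classical_sets reals.
From mathcomp Require Import complex.
Set Implicit Arguments. Unset Strict Implicit. Unset Printing Implicit Defensive.
Import Order.TTheory GRing.Theory Num.Theory.
Local Open Scope ring_scope.
Local Open Scope classical_set_scope.

Record opr (H : Type) := Opr { dom : set H ; app : H -> H }.
Arguments Opr {H}.
Arguments dom {H}.
Arguments app {H}.

Section Hilbert.
Variables (R : realType) (H : lmodType R[i]) (ip : H -> H -> R[i]).

(* inner product, antilinear in the first argument *)
Definition is_inner_product : Prop :=
  (forall (a : R[i]) (x y z : H), ip x (a *: y + z) = a * ip x y + ip x z) /\
  (forall x y : H, ip y x = conjc (ip x y)) /\
  (forall x : H, 0 <= ip x x) /\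
  (forall x : H, ip x x = 0 -> x = 0).

Definition hnorm (x : H) : R := Num.sqrt (complex.Re (ip x x)).

Definition converges (u : nat -> H) (l : H) : Prop :=
  forall e : R, 0 < e -> exists N : nat, forall n : nat, (N <= n)%N ->
    hnorm (u n - l) < e.

Definition cauchy_seq (u : nat -> H) : Prop :=
  forall e : R, 0 < e -> exists N : nat, forall m n : nat,
    (N <= m)%N -> (N <= n)%N -> hnorm (u m - u n) < e.

Definition is_hilbert : Prop :=
  is_inner_product /\ forall u, cauchy_seq u -> exists l, converges u l.

Definition is_subspace (D : set H) : Prop :=
  D 0 /\ forall (a : R[i]) (x y : H), D x -> D y -> D (a *: x + y).

Definition dense_set (D : set H) : Prop :=
  forall (x : H) (e : R), 0 < e -> exists y, D y /\ hnorm (x - y) < e.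

Definition is_operator (T : opr H) : Prop :=
  is_subspace (dom T) /\
  forall (a : R[i]) (x y : H), dom T x -> dom T y ->
    app T (a *: x + y) = a *: app T x + app T y.

Definition densely_defined (T : opr H) : Prop :=
  is_operator T /\ dense_set (dom T).

Definition closed_op (T : opr H) : Prop :=
  is_operator T /\
  forall (u : nat -> H) (x y : H), (forall n, dom T (u n)) ->
    converges u x -> converges (fun n => app T (u n)) y ->
    dom T x /\ app T x = y.

Definition op_incl (A B : opr H) : Prop :=
  (forall x, dom A x -> dom B x) /\ (forall x, dom A x -> app A x = app B x).

Definition op_eq (A B : opr H) : Prop := op_incl A B /\ op_incl B A.

Definition is_closure (A B : opr H) : Prop :=
  closed_op B /\ op_incl A B /\
  forall x, dom B x -> exists u : nat -> H, (forall n, dom A (u n)) /\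
    converges u x /\ converges (fun n => app A (u n)) (app B x).

Definition closable (A : opr H) : Prop := exists B, is_closure A B.

Definition op_restrict (A : opr H) (D : set H) : opr H := Opr D (app A).

(* dual pair: A ⊂ At^*, i.e. <x, At y> = <A x, y> for x ∈ D(A), y ∈ D(At) *)
Definition dual_pair (A At : opr H) : Prop :=
  densely_defined A /\ densely_defined At /\ closable A /\ closable At /\
  forall x y, dom A x -> dom At y -> ip x (app At y) = ip (app A x) y.

Definition common_core (A At : opr H) (D : set H) : Prop :=
  is_subspace D /\ (forall x, D x -> dom A x /\ dom At x) /\
  is_closure (op_restrict A D) A /\ is_closure (op_restrict At D) At.

Definition common_core_property (A At : opr H) : Prop :=
  closed_op A /\ closed_op At /\ exists D, common_core A At D.

Definition dissipative (B : opr H) : Prop :=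
  densely_defined B /\ forall x, dom B x -> 0 <= complex.Im (ip x (app B x)).

Definition symmetric_op (S : opr H) : Prop :=
  densely_defined S /\
  forall x y, dom S x -> dom S y -> ip x (app S y) = ip (app S x) y.

Definition nonneg_op (V : opr H) : Prop :=
  forall x, dom V x -> 0 <= ip x (app V x).

Definition op_plus_iV (D : set H) (S V : opr H) : opr H :=
  Opr D (fun x => app S x + 'i%C *: app V x).
Definition op_minus_iV (D : set H) (S V : opr H) : opr H :=
  Opr D (fun x => app S x - 'i%C *: app V x).

End Hilbert.

(* (a) On the common core D put S := (A + At)/2 and V := (A - At)/(2i).  The
   dual-pair identity <x, At y> = <A x, y> makes both symmetric, and it turns
   <x, V x> into Im <x, A x>, which is nonnegative since A is dissipative.  D is
   dense because it is a core of the densely defined operator A.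

   (b) S + iV and S - iV are formal adjoints of each other on the dense domain D.
   An operator T with a densely defined formal adjoint T' is closable: a limit y
   of T u_n along u_n -> x is pinned down by <z, y> = <T' z, x> for z in the
   dense domain of T', so the closure of the graph of T is again a graph.  The
   adjoint relation passes to the closures by continuity of the inner product,
   and D is a common core by construction. *)

From HB Require Import structures.
From mathcomp Require Import all_boot all_order all_algebra.
From mathcomp Require Import boolp classical_sets reals.
From mathcomp Require Import complex.
From mathcomp Require Import ring lra.
Import Order.TTheory GRing.Theory Num.Theory.
Local Open Scope ring_scope.
Local Open Scope classical_set_scope.
Local Open Scope complex_scope.
Set Implicit Arguments. Unset Strict Implicit. Unset Printing Implicit Defensive.

Lemma normReIm_le0 (R : realDomainType) (z : R[i]) :
  `|complex.Re z| + `|complex.Im z| <= 0 -> z = 0.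
Proof.
case: z => r s /= rs0; have [r0 s0] := (normr_ge0 r, normr_ge0 s).
by congr Complex; apply/normr0_eq0/le_anti; rewrite normr_ge0 andbT; lra.
Qed.

Section InnerProduct.
Variables (R : realType) (H : lmodType R[i]) (ip : H -> H -> R[i]).
Hypothesis hip : is_inner_product ip.
Implicit Types (x y z : H) (a : R[i]).

Lemma ipC x y : ip y x = conjc (ip x y).
Proof. exact: hip.2.1. Qed.

Lemma ipDr x y z : ip x (y + z) = ip x y + ip x z.
Proof. by have := hip.1 1 x y z; rewrite scale1r mul1r. Qed.

Lemma ipr0 x : ip x 0 = 0.
Proof. by apply/(addrI (ip x 0)); rewrite -ipDr !addr0. Qed.

Lemma ipZr a x y : ip x (a *: y) = a * ip x y.
Proof. by have := hip.1 a x y 0; rewrite !addr0 ipr0 addr0. Qed.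

Lemma ipNr x y : ip x (- y) = - ip x y.
Proof. by rewrite -scaleN1r ipZr mulN1r. Qed.

Lemma ipBr x y z : ip x (y - z) = ip x y - ip x z.
Proof. by rewrite ipDr ipNr. Qed.

Lemma ipDl x y z : ip (x + y) z = ip x z + ip y z.
Proof. by rewrite ![ip _ z]ipC ipDr rmorphD. Qed.

Lemma ipZl a x y : ip (a *: x) y = conjc a * ip x y.
Proof. by rewrite ![ip _ y]ipC ipZr rmorphM. Qed.

Lemma ipNl x y : ip (- x) y = - ip x y.
Proof. by rewrite ![ip _ y]ipC ipNr rmorphN. Qed.

Lemma ipBl x y z : ip (x - y) z = ip x z - ip y z.
Proof. by rewrite ipDl ipNl. Qed.

Lemma ip0l x : ip 0 x = 0.
Proof. by rewrite ipC ipr0 rmorph0. Qed.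

Lemma Re_ipC x y : complex.Re (ip y x) = complex.Re (ip x y).
Proof. by rewrite ipC; case: (ip x y). Qed.

Lemma ipxx x : ip x x = (hnorm ip x ^+ 2)%:C.
Proof.
have := hip.2.2.1 x; rewrite /hnorm.
by case: (ip x x) => a b; rewrite lecE /= => /andP[/eqP -> a0]; rewrite sqr_sqrtr.
Qed.

Lemma hnorm_sq x : hnorm ip x ^+ 2 = complex.Re (ip x x).
Proof. by rewrite ipxx. Qed.

Lemma hnorm_ge0 x : 0 <= hnorm ip x.
Proof. exact: sqrtr_ge0. Qed.

Lemma hnorm0 : hnorm ip 0 = 0.
Proof. by rewrite /hnorm ip0l sqrtr0. Qed.

Lemma hnorm_eq0 x : hnorm ip x = 0 -> x = 0.
Proof. by move=> x0; apply: hip.2.2.2; rewrite ipxx x0 expr0n. Qed.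

Lemma hnormZ a x : hnorm ip (a *: x) = Normc.normc a * hnorm ip x.
Proof.
rewrite /hnorm ipZl ipZr mulrA ipxx; case: a => a b /=.
by rewrite -sqrtrM ?addr_ge0 ?sqr_ge0 //; congr Num.sqrt; ring.
Qed.

Lemma hnorm_oppr x : hnorm ip (- x) = hnorm ip x.
Proof. by rewrite -scaleN1r hnormZ /= oppr0 expr0n addr0 sqrrN expr1n sqrtr1 mul1r. Qed.

Lemma hnorm_distC x y : hnorm ip (x - y) = hnorm ip (y - x).
Proof. by rewrite -hnorm_oppr opprB. Qed.

Lemma hnormD_sq x y :
  hnorm ip (x + y) ^+ 2 = hnorm ip x ^+ 2 + hnorm ip y ^+ 2 + 2 * complex.Re (ip x y).
Proof. by rewrite !hnorm_sq !ipDl !ipDr !raddfD /= Re_ipC; ring. Qed.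

Lemma Re_ip_le x y : complex.Re (ip x y) <= hnorm ip x * hnorm ip y.
Proof.
set r := complex.Re _; set p := hnorm ip x; set q := hnorm ip y.
have quad t : 0 <= p ^+ 2 - 2 * t * r + t ^+ 2 * q ^+ 2.
  have := sqr_ge0 (hnorm ip (x + (- t)%:C *: y)).
  rewrite hnormD_sq hnormZ ipZr /= expr0n addr0 sqrtr_sqr exprMn real_normK ?num_real //.
  have -> : complex.Re ((- t)%:C * ip x y) = - t * r.
    by rewrite /r; case: (ip x y) => * /=; rewrite mul0r subr0.
  by rewrite -/p -/q; lra.
have [q0|q0] := eqVneq q 0.
  by move: (hnorm_eq0 q0) => y0; rewrite /r y0 ipr0 mulr_ge0 ?hnorm_ge0.
have q2 : 0 < q ^+ 2 by rewrite exprn_gt0 // lt_def q0 hnorm_ge0.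
have : r ^+ 2 <= (p * q) ^+ 2.
  have := quad (r / q ^+ 2).
  have -> : p ^+ 2 - 2 * (r / q ^+ 2) * r + (r / q ^+ 2) ^+ 2 * q ^+ 2
          = ((p * q) ^+ 2 - r ^+ 2) / q ^+ 2 by field.
  by rewrite pmulr_lge0 ?invr_gt0 // subr_ge0.
have := mulr_ge0 (hnorm_ge0 x) (hnorm_ge0 y); rewrite -/p -/q; nra.
Qed.

Lemma Re_ip_abs x y : `|complex.Re (ip x y)| <= hnorm ip x * hnorm ip y.
Proof.
rewrite ler_norml Re_ip_le andbT.
by have := Re_ip_le x (- y); rewrite ipNr raddfN hnorm_oppr /=; lra.
Qed.

Lemma Im_ip_abs x y : `|complex.Im (ip x y)| <= hnorm ip x * hnorm ip y.
Proof.
have := Re_ip_abs x (- 'i *: y).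
rewrite ipZr hnormZ /= oppr0 expr0n add0r sqrrN expr1n sqrtr1 mul1r.
by case: (ip x y) => a b /=; rewrite oppr0 mul0r sub0r mulN1r opprK.
Qed.

Lemma ler_hnormD x y : hnorm ip (x + y) <= hnorm ip x + hnorm ip y.
Proof.
rewrite -(ler_pXn2r (isT : (0 < 2)%N)) ?nnegrE ?addr_ge0 ?hnorm_ge0 //.
by rewrite hnormD_sq sqrrD; have := Re_ip_le x y; lra.
Qed.

End InnerProduct.

Lemma invSn_lt_eventually (R : archiRealFieldType) (e : R) :
  0 < e -> exists N, forall n, (N <= n)%N -> n.+1%:R^-1 < e.
Proof.
move=> e0; exists (Num.Def.archi_bound e^-1) => n Nn.
rewrite invf_plt ?posrE ?ltr0Sn //; apply: lt_le_trans (archi_boundP _) _.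
  by rewrite invr_ge0 ltW.
by rewrite ler_nat (leq_trans Nn).
Qed.

Section Convergence.
Variables (R : realType) (H : lmodType R[i]) (ip : H -> H -> R[i]).
Hypothesis hip : is_inner_product ip.
Implicit Types (x y z : H) (a : R[i]) (u v : nat -> H).

Lemma converges_cst x : converges ip (fun _ => x) x.
Proof. by move=> e e0; exists 0%N => n _; rewrite subrr hnorm0. Qed.

Lemma eq_converges u v x : u =1 v -> converges ip u x -> converges ip v x.
Proof. by move=> uv cu e /cu[N cuN]; exists N => n /cuN; rewrite uv. Qed.

Lemma convergesD u v x y : converges ip u x -> converges ip v y ->
  converges ip (fun n => u n + v n) (x + y).
Proof.
move=> cu cv e e0; have e2 : 0 < e / 2 by rewrite divr_gt0.
have [N1 cuN] := cu _ e2; have [N2 cvN] := cv _ e2.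
exists (maxn N1 N2) => n; rewrite geq_max => /andP[/cuN un /cvN vn].
rewrite opprD addrACA; have := ler_hnormD hip (u n - x) (v n - y); lra.
Qed.

Lemma convergesZ a u x : converges ip u x -> converges ip (fun n => a *: u n) (a *: x).
Proof.
move=> cu e e0; have c0 : 0 <= Normc.normc a by case: a => *; apply: sqrtr_ge0.
set c := Normc.normc a in c0 *.
have c1 : 0 < c + 1 by rewrite ltr_wpDl.
have [N cuN] := cu _ (divr_gt0 e0 c1); exists N => n /cuN un.
rewrite -scalerBr hnormZ -/c; rewrite ltr_pdivlMr // in un.
have := hnorm_ge0 ip (u n - x); nra.
Qed.

Lemma ip_lim_eq u v x y (a b : H) : converges ip u x -> converges ip v y ->
  (forall n, ip a (u n) = ip b (v n)) -> ip a x = ip b y.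
Proof.
move=> cu cv euv; apply/eqP; rewrite -subr_eq0; set d := _ - _.
have d_split n : d = ip a (x - u n) - ip b (y - v n) by rewrite /d !ipBr // euv; ring.
have d_bound n : `|complex.Re d| + `|complex.Im d|
    <= 2 * (hnorm ip a * hnorm ip (u n - x) + hnorm ip b * hnorm ip (v n - y)).
  rewrite (d_split n) !raddfB /= (hnorm_distC hip (u n)) (hnorm_distC hip (v n)).
  have := ler_normB (complex.Re (ip a (x - u n))) (complex.Re (ip b (y - v n))).
  have := ler_normB (complex.Im (ip a (x - u n))) (complex.Im (ip b (y - v n))).
  have := Re_ip_abs hip a (x - u n); have := Re_ip_abs hip b (y - v n).
  have := Im_ip_abs hip a (x - u n); have := Im_ip_abs hip b (y - v n).
  lra.
have : `|complex.Re d| + `|complex.Im d| <= 0.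
  apply/ler_addgt0Pl => e e0; rewrite addr0.
  set c := hnorm ip a + hnorm ip b + 1.
  have [a0 b0] := (hnorm_ge0 ip a, hnorm_ge0 ip b).
  have [ac bc] : hnorm ip a <= c /\ hnorm ip b <= c by rewrite /c; split; lra.
  have K0 : 0 < 4 * c by rewrite mulr_gt0 // ltr_wpDl // addr_ge0.
  have [N1 cuN] := cu _ (divr_gt0 e0 K0); have [N2 cvN] := cv _ (divr_gt0 e0 K0).
  set n := maxn N1 N2; apply: (le_trans (d_bound n)).
  have := cuN n (leq_maxl N1 N2); have := cvN n (leq_maxr N1 N2).
  have := ler_wpM2r (hnorm_ge0 ip (u n - x)) ac.
  have := ler_wpM2r (hnorm_ge0 ip (v n - y)) bc.
  rewrite !ltr_pdivlMr //; lra.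
by move/normReIm_le0 ->.
Qed.

Lemma converges_near u w x : (forall n, hnorm ip (w n - u n) < n.+1%:R^-1) ->
  converges ip u x -> converges ip w x.
Proof.
move=> wu cu e e0; have e2 : 0 < e / 2 by rewrite divr_gt0.
have [N1 cuN] := cu _ e2; have [N2 epsN] := invSn_lt_eventually e2.
exists (maxn N1 N2) => n; rewrite geq_max => /andP[/cuN un /epsN nN].
have -> : w n - x = (w n - u n) + (u n - x) by rewrite addrA subrK.
have := lt_trans (wu n) nN; have := ler_hnormD hip (w n - u n) (u n - x); lra.
Qed.

Lemma dense_orthogonal_eq0 (D : set H) x :
  dense_set ip D -> (forall z, D z -> ip z x = 0) -> x = 0.
Proof.
move=> dD Dx; apply: (hnorm_eq0 hip); apply/eqP; apply: contraT => x0.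
have x_gt0 : 0 < hnorm ip x by rewrite lt_def x0 hnorm_ge0.
have [z [Dz xz]] := dD x _ (divr_gt0 x_gt0 (ltr0Sn _ 1)).
have : hnorm ip x ^+ 2 = complex.Re (ip (x - z) x) by rewrite (ipBl hip) (Dx z Dz) subr0 hnorm_sq.
have := Re_ip_le hip (x - z) x; have := hnorm_ge0 ip (x - z); nra.
Qed.

Lemma dense_setS (D E : set H) : D `<=` E -> dense_set ip D -> dense_set ip E.
Proof. by move=> DE dD x e /(dD x)[y [/DE Ey xy]]; exists y. Qed.

Lemma dense_set_approx (D E : set H) : dense_set ip E ->
  (forall y, E y -> exists u, (forall n, D (u n)) /\ converges ip u y) -> dense_set ip D.
Proof.
move=> dE ED x e e0; have e2 : 0 < e / 2 by rewrite divr_gt0.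
have [y [Ey xy]] := dE x _ e2; have [u [Du /(_ _ e2)[N cuN]]] := ED y Ey.
exists (u N); split => //; have uN := cuN N (leqnn N).
have -> : x - u N = (x - y) + (y - u N) by rewrite addrA subrK.
rewrite (hnorm_distC hip (u N)) in uN; have := ler_hnormD hip (x - y) (y - u N); lra.
Qed.

End Convergence.

Section GraphClosure.
Variables (R : realType) (H : lmodType R[i]) (ip : H -> H -> R[i]).
Hypothesis hip : is_inner_product ip.
Variable T : opr H.
Implicit Types (x y : H) (u w : nat -> H).

Definition graph_limit x y := exists u, (forall n, dom T (u n)) /\
  converges ip u x /\ converges ip (fun n => app T (u n)) y.

Definition closure_op : opr H :=
  Opr (fun x => exists y, graph_limit x y) (fun x => xget 0 (graph_limit x)).

Lemma closure_op_graph x : dom closure_op x -> graph_limit x (app closure_op x).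
Proof. exact: xgetPex. Qed.

Lemma graph_limit_closed u w x y : (forall n, graph_limit (u n) (w n)) ->
  converges ip u x -> converges ip w y -> graph_limit x y.
Proof.
move=> uw cu cw.
have approx n : exists z, dom T z /\ hnorm ip (z - u n) < n.+1%:R^-1 /\
    hnorm ip (app T z - w n) < n.+1%:R^-1.
  have eps0 : 0 < n.+1%:R^-1 :> R by rewrite invr_gt0 ltr0Sn.
  have [s [Ts [/(_ _ eps0) [N1 sN] /(_ _ eps0) [N2 TsN]]]] := uw n.
  exists (s (maxn N1 N2)); split => //.
  by split; [apply: sN | apply: TsN]; rewrite leq_max leqnn ?orbT.
have [z hz] := choice approx.
exists z; split; first by move=> n; case: (hz n).
by split; [apply: (converges_near hip _ cu) | apply: (converges_near hip _ cw)] => n;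
  case: (hz n) => _ [].
Qed.

Hypothesis hT : is_operator T.

Lemma graph_limit_dom x : dom T x -> graph_limit x (app T x).
Proof. by move=> Tx; exists (fun=> x); split => //; split; apply: converges_cst. Qed.

Lemma graph_limitD a x y x' y' :
  graph_limit x y -> graph_limit x' y' -> graph_limit (a *: x + x') (a *: y + y').
Proof.
move=> [u [Tu [cu cTu]]] [w [Tw [cw cTw]]].
exists (fun n => a *: u n + w n); split; first by move=> n; apply: hT.1.2.
split; first exact: convergesD (convergesZ hip a cu) cw.
by apply: eq_converges (convergesD hip (convergesZ hip a cTu) cTw) => n; rewrite hT.2.
Qed.

End GraphClosure.

Section GraphClosureAdjoint.
Variables (R : realType) (H : lmodType R[i]) (ip : H -> H -> R[i]).
Hypothesis hip : is_inner_product ip.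
Variables T1 T2 : opr H.
Hypothesis adj12 :
  forall x y, dom T1 x -> dom T2 y -> ip x (app T2 y) = ip (app T1 x) y.

Lemma graph_limit_adjoint x x' y y' :
  graph_limit ip T1 x x' -> graph_limit ip T2 y y' -> ip x y' = ip x' y.
Proof.
move=> [u [T1u [cu cT1u]]] [v [T2v [cv cT2v]]].
have u_adj m : ip (u m) y' = ip (app T1 (u m)) y.
  by apply: (ip_lim_eq hip cT2v cv) => n; apply: adj12.
rewrite (ipC hip y' x) (ipC hip y x'); congr conjc.
apply: (ip_lim_eq hip cu cT1u) => m.
by rewrite (ipC hip (u m)) (ipC hip (app T1 (u m))) u_adj.
Qed.

Lemma closure_op_adjoint x y : dom (closure_op ip T1) x -> dom (closure_op ip T2) y ->
  ip x (app (closure_op ip T2) y) = ip (app (closure_op ip T1) x) y.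
Proof. by move=> /closure_op_graph T1x /closure_op_graph T2y; apply: graph_limit_adjoint. Qed.

End GraphClosureAdjoint.

Section ClosureOp.
Variables (R : realType) (H : lmodType R[i]) (ip : H -> H -> R[i]).
Hypothesis hip : is_inner_product ip.
Variables T T' : opr H.
Hypothesis hT : is_operator T.
Hypothesis dT' : dense_set ip (dom T').
Hypothesis adjT :
  forall x y, dom T' x -> dom T y -> ip x (app T y) = ip (app T' x) y.

Lemma graph_limit_unique x y1 y2 :
  graph_limit ip T x y1 -> graph_limit ip T x y2 -> y1 = y2.
Proof.
move=> Txy1 Txy2; apply/eqP; rewrite -subr_eq0; apply/eqP.
apply: (dense_orthogonal_eq0 hip dT') => z T'z.
have adj_lim := graph_limit_adjoint hip adjT (graph_limit_dom hip T'z).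
by rewrite (ipBr hip) (adj_lim _ _ Txy1) (adj_lim _ _ Txy2) subrr.
Qed.

Lemma closure_op_app x y :
  graph_limit ip T x y -> dom (closure_op ip T) x /\ app (closure_op ip T) x = y.
Proof.
move=> Txy; have Tx : dom (closure_op ip T) x by exists y.
by split => //; apply: graph_limit_unique (closure_op_graph Tx) Txy.
Qed.

Lemma closure_op_is_closure : is_closure ip T (closure_op ip T).
Proof.
have lin a x y : dom (closure_op ip T) x -> dom (closure_op ip T) y ->
    graph_limit ip T (a *: x + y) (a *: app (closure_op ip T) x + app (closure_op ip T) y).
  by move=> /closure_op_graph Tx /closure_op_graph Ty; exact: (graph_limitD hip hT a Tx Ty).
split; last split.
- split; last first.
    move=> u x y Tu cu cTu; apply: closure_op_app.
    by apply: (graph_limit_closed hip _ cu cTu) => n; apply: closure_op_graph.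
  split; last by move=> a x y Tx Ty; apply: (closure_op_app (lin a x y Tx Ty)).2.
  split; first by exists (app T 0); exact: (graph_limit_dom hip hT.1.1).
  by move=> a x y Tx Ty; exists (a *: app (closure_op ip T) x + app (closure_op ip T) y); apply: lin.
- by split => x /(graph_limit_dom hip) /closure_op_app [].
- by move=> x /closure_op_graph.
Qed.

End ClosureOp.

Section FormalAdjoints.
Variables (R : realType) (H : lmodType R[i]) (ip : H -> H -> R[i]).
Hypothesis hip : is_inner_product ip.

Lemma is_closure_restrict (T B : opr H) :
  is_closure ip T B -> is_closure ip (op_restrict B (dom T)) B.
Proof.
move=> [cB [[TB eTB] approxB]]; split=> //; split; first by split=> [x /TB|].
move=> x /approxB[u [Tu [cu cTu]]]; exists u; do 2!split => //.
by apply: eq_converges cTu => n /=; rewrite eTB.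
Qed.

Lemma closed_is_closure (B : opr H) : closed_op ip B -> is_closure ip B B.
Proof.
move=> cB; split=> //; split=> // x Bx.
by exists (fun=> x); split => //; split; apply: converges_cst.
Qed.

Lemma adjointC (T T' : opr H) :
  (forall x y, dom T x -> dom T' y -> ip x (app T' y) = ip (app T x) y) ->
  forall x y, dom T' x -> dom T y -> ip x (app T y) = ip (app T' x) y.
Proof. by move=> adj x y T'x Ty; rewrite (ipC hip) -adj // -(ipC hip). Qed.

Lemma closure_op_dual_pair (T T' : opr H) :
  densely_defined ip T -> is_operator T' -> dom T' = dom T ->
  (forall x y, dom T x -> dom T' y -> ip x (app T' y) = ip (app T x) y) ->
  let Tb := closure_op ip T in let Tb' := closure_op ip T' in
  is_closure ip T Tb /\ is_closure ip T' Tb' /\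
  dual_pair ip Tb Tb' /\ common_core_property ip Tb Tb'.
Proof.
move=> [hT dT] hT' eT adj Tb Tb'.
have dT' : dense_set ip (dom T') by rewrite eT.
have clT : is_closure ip T Tb := closure_op_is_closure hip hT dT' (adjointC adj).
have clT' : is_closure ip T' Tb' := closure_op_is_closure hip hT' dT adj.
have [[oTb _] [[TTb _] _]] := clT; have [[oTb' _] [[TTb' _] _]] := clT'.
split=> //; split=> //; split.
  split; first by split; [exact: oTb | exact: dense_setS TTb dT].
  split; first by split; [exact: oTb' | exact: dense_setS TTb' dT'].
  split; first by exists Tb; apply: closed_is_closure clT.1.
  split; first by exists Tb'; apply: closed_is_closure clT'.1.
  exact: (closure_op_adjoint hip adj).
split; first exact: clT.1.
split; first exact: clT'.1.
exists (dom T); split; first exact: hT.1.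
split; first by move=> x Tx; split; [apply: TTb | apply: TTb'; rewrite eT].
by split; [apply: is_closure_restrict clT | rewrite -eT; apply: is_closure_restrict clT'].
Qed.

End FormalAdjoints.

Section ReImParts.
Variables (R : realType) (H : lmodType R[i]) (ip : H -> H -> R[i]).
Hypothesis hip : is_inner_product ip.
Variables (A At : opr H) (D : set H).
Hypothesis hA : is_operator A.
Hypothesis hAt : is_operator At.
Hypothesis sD : is_subspace D.
Hypothesis DA : forall x, D x -> dom A x /\ dom At x.
Hypothesis dD : dense_set ip D.
Hypothesis dualA : forall x y, dom A x -> dom At y -> ip x (app At y) = ip (app A x) y.

Definition op_comb (c d : R[i]) : opr H := Opr D (fun x => c *: app A x + d *: app At x).

Lemma op_comb_operator c d : is_operator (op_comb c d).
Proof.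
split=> // a x y /DA[Ax Atx] /DA[Ay Aty] /=.
rewrite hA.2 // hAt.2 // !scalerDr !scalerA (mulrC c) (mulrC d).
by rewrite addrACA.
Qed.

Lemma op_comb_sum c d c' d' k x :
  app (op_comb c d) x + k *: app (op_comb c' d') x
  = (c + k * c') *: app A x + (d + k * d') *: app At x.
Proof. by rewrite /= scalerDr !scalerA !scalerDl addrACA. Qed.

Definition re_part := op_comb (2^-1)%:C (2^-1)%:C.
Definition im_part := op_comb (- 2^-1)*i (2^-1)*i.

Lemma op_comb_symmetric c : symmetric_op ip (op_comb c (conjc c)).
Proof.
split; first by split; [apply: op_comb_operator | exact: dD].
move=> x y /DA[Ax Atx] /DA[Ay Aty] /=.
rewrite (ipDr hip) (ipDl hip) !(ipZr hip) !(ipZl hip) conjcK dualA //.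
by rewrite [ip x (app A y)](ipC hip) -dualA // -(ipC hip) addrC.
Qed.

Lemma re_part_symmetric : symmetric_op ip re_part.
Proof. by have := op_comb_symmetric (2^-1)%:C; rewrite conjc_real. Qed.

Lemma im_part_symmetric : symmetric_op ip im_part.
Proof. by have := op_comb_symmetric (- 2^-1)*i; rewrite /= opprK. Qed.

Lemma ip_im_part x : D x -> ip x (app im_part x) = (complex.Im (ip x (app A x)))%:C.
Proof.
move=> /DA[Ax Atx] /=; rewrite (ipDr hip) !(ipZr hip) dualA // (ipC hip x (app A x)).
by case: (ip x (app A x)) => a b; congr Complex => /=; field.
Qed.

Lemma re_im_sumE x : app re_part x + 'i *: app im_part x = app A x.
Proof.
rewrite op_comb_sum.
have -> : (2^-1)%:C + 'i * (- 2^-1)*i = 1 :> R[i].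
  by congr Complex => /=; field.
have -> : (2^-1)%:C + 'i * (2^-1)*i = 0 :> R[i].
  by congr Complex => /=; field.
by rewrite scale1r scale0r addr0.
Qed.

Lemma re_im_diffE x : app re_part x - 'i *: app im_part x = app At x.
Proof.
rewrite -scaleNr op_comb_sum.
have -> : (2^-1)%:C + - 'i * (- 2^-1)*i = 0 :> R[i].
  by congr Complex => /=; field.
have -> : (2^-1)%:C + - 'i * (2^-1)*i = 1 :> R[i].
  by congr Complex => /=; field.
by rewrite scale1r scale0r add0r.
Qed.

End ReImParts.

Section Decomposition.
Variables (R : realType) (H : lmodType R[i]) (ip : H -> H -> R[i]).
Hypothesis hip : is_inner_product ip.

Lemma common_core_dense (A At : opr H) (D : set H) :
  densely_defined ip A -> common_core ip A At D -> dense_set ip D.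
Proof.
move=> [_ dA] [_ [_ [[_ [_ approxA]] _]]]; apply: (dense_set_approx hip dA) => y /approxA.
by move=> [u [Du [cu _]]]; exists u.
Qed.

Lemma dual_pair_re_im (A At : opr H) (D : set H) :
  dual_pair ip A At -> common_core ip A At D -> dissipative ip A ->
  exists S V : opr H,
    symmetric_op ip S /\ symmetric_op ip V /\ nonneg_op ip V /\
    dom S = D /\ dom V = D /\
    op_eq (op_restrict A D) (op_plus_iV D S V) /\
    op_eq (op_restrict At D) (op_minus_iV D S V).
Proof.
move=> [[hA dA] [[hAt _] [_ [_ dualA]]]] coreD [_ dissA].
have dD := common_core_dense (conj hA dA) coreD.
have [sD [DA _]] := coreD.
exists (re_part A At D), (im_part A At D).
split; first exact: re_part_symmetric.
split; first exact: im_part_symmetric.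
split; first by move=> x Dx; rewrite ip_im_part // ler0c; apply: dissA (DA x Dx).1.
do 2!split => //.
by split; split; split => // x _ /=; rewrite ?re_im_sumE ?re_im_diffE.
Qed.

End Decomposition.

Section SymmetricCombination.
Variables (R : realType) (H : lmodType R[i]) (ip : H -> H -> R[i]).
Hypothesis hip : is_inner_product ip.
Variables S V : opr H.
Hypothesis hS : symmetric_op ip S.
Hypothesis hV : symmetric_op ip V.
Hypothesis eSV : dom S = dom V.

Definition op_addZ (k : R[i]) : opr H := Opr (dom S) (fun x => app S x + k *: app V x).

Lemma op_addZ_operator k : is_operator (op_addZ k).
Proof.
have [[[sS linS] _] _] := hS; have [[[_ linV] _] _] := hV.
split=> // a x y /= Sx Sy; have [Vx Vy] : dom V x /\ dom V y by rewrite -eSV.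
by rewrite linS // linV // !scalerDr !scalerA (mulrC k a) addrACA.
Qed.

Lemma op_addZ_adjoint k x y : dom S x -> dom S y ->
  ip x (app (op_addZ (conjc k)) y) = ip (app (op_addZ k) x) y.
Proof.
move=> Sx Sy /=; have [[_ symS] [_ symV]] := (hS, hV).
have [Vx Vy] : dom V x /\ dom V y by rewrite -eSV.
by rewrite (ipDr hip) (ipDl hip) (ipZr hip) (ipZl hip) symS // symV.
Qed.

Lemma op_minus_iVE : op_minus_iV (dom S) S V = op_addZ (conjc 'i).
Proof.
have -> : conjc 'i = - 'i :> R[i] by congr Complex; rewrite oppr0.
by rewrite /op_addZ; congr Opr; apply: funext => x; rewrite scaleNr.
Qed.

End SymmetricCombination.

Theorem lemma3p3 (R : realType) (H : lmodType R[i]) (ip : H -> H -> R[i]) :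
  is_hilbert ip ->
  (* (a) *)
  (forall (A At : opr H) (D : set H),
      closed_op ip A -> closed_op ip At -> dual_pair ip A At ->
      common_core ip A At D -> dissipative ip A ->
      exists S V : opr H,
        symmetric_op ip S /\ symmetric_op ip V /\ nonneg_op ip V /\
        dom S = D /\ dom V = D /\
        op_eq (op_restrict A D) (op_plus_iV D S V) /\
        op_eq (op_restrict At D) (op_minus_iV D S V)) /\
  (* (b) *)
  (forall S V : opr H,
      symmetric_op ip S -> symmetric_op ip V -> nonneg_op ip V -> dom S = dom V ->
      dissipative ip (op_plus_iV (dom S) S V) ->
      exists Ab Atb : opr H,
        is_closure ip (op_plus_iV (dom S) S V) Ab /\
        is_closure ip (op_minus_iV (dom S) S V) Atb /\
        dual_pair ip Ab Atb /\ common_core_property ip Ab Atb).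
Proof.
move=> [hip _]; split=> [A At D _ _|S V hS hV _ eSV _]; first exact: dual_pair_re_im.
have dT : densely_defined ip (op_plus_iV (dom S) S V).
  by split; [exact: op_addZ_operator hS hV eSV 'i | exact: hS.1.2].
have := closure_op_dual_pair hip dT (op_addZ_operator hS hV eSV (conjc 'i)) erefl
  (op_addZ_adjoint hip hS hV eSV 'i).
by rewrite op_minus_iVE => closures; eexists; eexists; exact: closures.
Qed.
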